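(* Let $\alpha,\beta,\Delta\in\mathbb{C}$. The conformal $\widetilde{\mathrm{SV}}$-module $V(\alpha,\beta,\Delta)$ is irreducible if and only if $\Delta\neq0$ or $\beta\neq0$.
   Context: A conformal module over a Lie conformal algebra $R$ is a $\mathbb{C}[\partial]$-module $V$ with $a\mapsto a_\lambda\in\mathrm{End}_{\mathbb{C}}(V)\otimes\mathbb{C}[\lambda]$ satisfying $[a_\lambda,b_\mu]=[a_\lambda b]_{\lambda+\mu}$ and $(\partial a)_\lambda=[\partial,a_\lambda]=-\lambda a_\lambda$; it is irreducible if it has no nonzero proper submodule ($\mathbb{C}[\partial]$-submodule stable under all $a_\lambda$). $\widetilde{\mathrm{SV}}$ is the Lie conformal algebra that is the free $\mathbb{C}[\partial]$-module with basis $L,M,Y,N$ whose nonzero $\lambda$-brackets (up to skew-symmetry) are $[L_\lambda L]=(\partial+2\lambda)L$, $[L_\lambda Y]=(\partial+\tfrac32\lambda)Y$, $[L_\lambda M]=(\partial+\lambda)M$, $[Y_\lambda Y]=(\partial+2\lambda)M$, $[L_\lambda N]=(\partial+\lambda)N$, $[N_\lambda M]=2M$, $[N_\lambda Y]=Y$. $V(\alpha,\beta,\Delta)=\mathbb{C}[\partial]v_\Delta$ is the free rank-one module with $L_\lambda v_\Delta=(\partial+\alpha+\Delta\lambda)v_\Delta$, $N_\lambda v_\Delta=\beta v_\Delta$, $M_\lambda v_\Delta=Y_\lambda v_\Delta=0$. *)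

(* The complex numbers are modelled as R[i] for an arbitrary
   R : realType (a model of the real numbers), i.e. C = R[i] is the field of
   complex numbers. *)
From mathcomp Require Import all_boot all_algebra.
From mathcomp Require Import reals.
From mathcomp.real_closed Require Import complex.

Set Implicit Arguments.
Unset Strict Implicit.
Unset Printing Implicit Defensive.
Import GRing.Theory.
Local Open Scope ring_scope.

(* The Lie conformal algebra SV~ is the free C[d]-module with basis L,M,Y,N. *)
Inductive svgen := genL | genM | genY | genN.

(* An element of SV~ :  pL(d) L + pM(d) M + pY(d) Y + pN(d) N. *)
Record sv_elt (R : realType) := SvElt {
  svL : {poly R[i]}; svM : {poly R[i]}; svY : {poly R[i]}; svN : {poly R[i]} }.

(* The module V(alpha,beta,Delta) = C[d] v_Delta is identified with {poly C}:
   the polynomial f stands for f(d) v_Delta.  A lambda-bracket value, an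
   element of V[lambda] = V (x) C[lambda], is a polynomial in lambda with
   coefficients in V, i.e. an element of {poly {poly C}}; the outer variable
   'X is lambda and the inner variable 'Y = ('X)%:P is d. *)

Definition shiftl (R : realType) (f : {poly R[i]}) : {poly {poly R[i]}} :=
  f^:P \Po ('X + 'Y).

Definition at_neg_lambda (R : realType) (p : {poly R[i]}) : {poly {poly R[i]}} :=
  p^:P \Po (- 'X).

(* Action of the generators on f(d) v_Delta, determined by
   L_lambda v = (d + alpha + Delta lambda) v, N_lambda v = beta v,
   M_lambda v = Y_lambda v = 0, and the sesquilinearity
   a_lambda (d u) = (d + lambda) a_lambda u  (from [d, a_lambda] = -lambda a_lambda),
   so that a_lambda (f(d) v) = f(d + lambda) a_lambda v. *)
Definition gen_act (R : realType) (alpha beta Delta : R[i]) (g : svgen)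
    (f : {poly R[i]}) : {poly {poly R[i]}} :=
  match g with
  | genL => shiftl f * ('Y + (alpha%:P)%:P + (Delta%:P)%:P * 'X)
  | genN => shiftl f * (beta%:P)%:P
  | genM => 0
  | genY => 0
  end.

(* Action of a general element a = sum_g p_g(d) g of SV~, using
   (p(d) g)_lambda = p(-lambda) g_lambda. *)
Definition sv_act (R : realType) (alpha beta Delta : R[i]) (a : sv_elt R)
    (f : {poly R[i]}) : {poly {poly R[i]}} :=
    at_neg_lambda (svL a) * gen_act alpha beta Delta genL f
  + at_neg_lambda (svM a) * gen_act alpha beta Delta genM f
  + at_neg_lambda (svY a) * gen_act alpha beta Delta genY f
  + at_neg_lambda (svN a) * gen_act alpha beta Delta genN f.

(* U is a submodule of V(alpha,beta,Delta): a C[d]-submodule (C-subspace stable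
   under d) such that a_lambda U is contained in U[lambda] for all a in SV~,
   i.e. every lambda-coefficient of a_lambda u lies in U. *)
Definition is_submodule (R : realType) (alpha beta Delta : R[i])
    (U : {poly R[i]} -> Prop) : Prop :=
  [/\ U 0,
      (forall u w, U u -> U w -> U (u + w)),
      (forall (c : R[i]) u, U u -> U (c *: u)),
      (forall u, U u -> U ('X * u)) &
      (forall (a : sv_elt R) u, U u ->
         forall k : nat, U ((sv_act alpha beta Delta a u)`_k))].

Definition irreducible_V (R : realType) (alpha beta Delta : R[i]) : Prop :=
  forall U : {poly R[i]} -> Prop, is_submodule alpha beta Delta U ->
    (forall u, U u -> u = 0) \/ (forall u, U u).

(* If Delta != 0 (resp. beta != 0), the top lambda-coefficient of
   L_lambda (f(d) v) (resp. N_lambda (f(d) v)) is the nonzero constant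
   Delta lc(f) v (resp. beta lc(f) v); so every nonzero submodule contains v
   and, being stable under d, is everything.  If Delta = beta = 0, every
   a_lambda maps f(d) v to a multiple of (d + alpha) v, so (d + alpha) V is a
   nonzero proper submodule. *)
From mathcomp Require Import all_boot all_algebra.
From mathcomp Require Import reals.
From mathcomp.real_closed Require Import complex.
From Stdlib Require Import Classical.

Set Implicit Arguments.
Unset Strict Implicit.
Unset Printing Implicit Defensive.
Local Open Scope ring_scope.
Import GRing.Theory.

Section SVModule.
Variable R : realType.
Implicit Types (alpha beta Delta c : R[i]) (u : {poly R[i]}).

Lemma lead_coef_shiftl u : lead_coef (shiftl u) = (lead_coef u)%:P.
Proof.
rewrite /shiftl lead_coef_comp; last by rewrite size_XaddC.
by rewrite lead_coefXaddC expr1n mulr1 lead_coef_map.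
Qed.

Lemma lead_coef_L_factor alpha Delta : Delta != 0 ->
  lead_coef ('Y + (alpha%:P)%:P + (Delta%:P)%:P * 'X : {poly {poly R[i]}})
    = Delta%:P.
Proof.
move=> nz_Delta.
have -> : 'Y + (alpha%:P)%:P + (Delta%:P)%:P * 'X
          = (Delta%:P)%:P * 'X + ('X + alpha%:P)%:P :> {poly {poly R[i]}}.
  by rewrite rmorphD /= addrC.
rewrite lead_coefDl ?lead_coefMX ?lead_coefC //.
by rewrite size_mulX ?polyC_eq0 // !size_polyC polyC_eq0 nz_Delta ltnS leq_b1.
Qed.

Lemma at_neg_lambda0 : at_neg_lambda (0 : {poly R[i]}) = 0.
Proof. by rewrite /at_neg_lambda rmorph0 comp_poly0. Qed.

Lemma at_neg_lambda1 : at_neg_lambda (1 : {poly R[i]}) = 1.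
Proof. by rewrite /at_neg_lambda rmorph1 comp_polyC. Qed.

Lemma sv_act_L alpha beta Delta u :
  sv_act alpha beta Delta (SvElt 1 0 0 0) u = gen_act alpha beta Delta genL u.
Proof.
rewrite /sv_act [svL _]/= [svM _]/= [svY _]/= [svN _]/=.
by rewrite at_neg_lambda1 mul1r at_neg_lambda0 !mul0r !addr0.
Qed.

Lemma sv_act_N alpha beta Delta u :
  sv_act alpha beta Delta (SvElt 0 0 0 1) u = gen_act alpha beta Delta genN u.
Proof.
rewrite /sv_act [svL _]/= [svM _]/= [svY _]/= [svN _]/=.
by rewrite at_neg_lambda1 mul1r at_neg_lambda0 !mul0r !add0r.
Qed.

Lemma sv_act_degenerate alpha (a : sv_elt R) u :
  sv_act alpha 0 0 a u
    = at_neg_lambda (svL a) * shiftl u * ('X + alpha%:P)%:P.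
Proof.
rewrite /sv_act /gen_act !polyC0 !mul0r !mulr0 !addr0 mulrA.
by rewrite rmorphD.
Qed.

Section Submodule.
Variables (alpha beta Delta : R[i]) (U : {poly R[i]} -> Prop).
Hypothesis subU : is_submodule alpha beta Delta U.

Lemma submodule_lead_coef_act (a : sv_elt R) {u} :
  U u -> U (lead_coef (sv_act alpha beta Delta a u)).
Proof. by case: subU => _ _ _ _ Uact Uu; apply: Uact. Qed.

Lemma submodule_full_of_const c : c != 0 -> U c%:P -> forall u, U u.
Proof.
case: subU => U0 UD UZ UX _ nz_c Uc.
have U1 : U 1 by move: (UZ c^-1 _ Uc); rewrite scale_polyC mulVf.
elim/poly_ind => [//|p d Up].
apply: UD; first by rewrite mulrC; apply: UX.
by rewrite -alg_polyC; apply: UZ.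
Qed.

Lemma submodule_full_of_nonzero u :
  Delta != 0 \/ beta != 0 -> U u -> u != 0 -> forall w, U w.
Proof.
move=> nz_Delta_beta Uu nz_u.
have nz_lc : lead_coef u != 0 by rewrite lead_coef_eq0.
case: nz_Delta_beta => [nz_Delta|nz_beta].
- have := submodule_lead_coef_act (SvElt 1 0 0 0) Uu.
  rewrite sv_act_L lead_coefM lead_coef_shiftl lead_coef_L_factor // -polyCM.
  by apply: submodule_full_of_const; rewrite mulf_neq0.
- have := submodule_lead_coef_act (SvElt 0 0 0 1) Uu.
  rewrite sv_act_N lead_coefM lead_coef_shiftl !lead_coefC -polyCM.
  by apply: submodule_full_of_const; rewrite mulf_neq0.
Qed.

End Submodule.

Lemma is_submodule_degenerate alpha :
  is_submodule alpha 0 0 (fun u => ('X + alpha%:P) %| u).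
Proof.
split=> [|u w|c u|u|a u dvd_u k]; rewrite ?dvdp0 //.
- exact: dvdp_add.
- by rewrite -mul_polyC; apply: dvdp_mull.
- exact: dvdp_mull.
- by rewrite sv_act_degenerate coefMC dvdp_mull.
Qed.

Lemma degenerate_not_irreducible alpha : ~ irreducible_V alpha 0 0.
Proof.
have nz_d : 'X + alpha%:P != 0 by rewrite -size_poly_eq0 size_XaddC.
case/(_ _ (is_submodule_degenerate alpha)) => [trivial|full].
- by have := trivial _ (dvdpp _); move/eqP; rewrite (negbTE nz_d).
- by have := full 1; rewrite dvdp1 size_XaddC.
Qed.

Lemma irreducible_nondegenerate alpha beta Delta :
  Delta != 0 \/ beta != 0 -> irreducible_V alpha beta Delta.
Proof.
move=> nz_Delta_beta U subU.
case: (classic (exists2 u, U u & u != 0)) => [[u Uu nz_u]|no_nz].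
- right; exact: (submodule_full_of_nonzero subU nz_Delta_beta Uu nz_u).
- left=> u Uu; have [//|nz_u] := eqVneq u 0.
  by case: no_nz; exists u.
Qed.

End SVModule.

Theorem proposition4p1 (R : realType) (alpha beta Delta : R[i]) :
  irreducible_V alpha beta Delta <-> (Delta != 0 \/ beta != 0).
Proof.
split; last exact: irreducible_nondegenerate.
have [-> | _] := eqVneq Delta 0; last by left.
have [-> /degenerate_not_irreducible [] | _] := eqVneq beta 0; last by right.
Qed.
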